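(* Let $k$ be a positive integer and let $\Pi_0,\Pi_1,\Pi\in\mathrm{Part}_2(2k)$, with $\Pi_0$ and $\Pi_1$ perfect matchings, and assume $\#(\Pi_0\vee\Pi_1\vee\Pi)=1$. Then $$\#(\Pi_0\vee\Pi)+\#(\Pi_1\vee\Pi)\le 1+\#\Pi\le k+1,$$ and moreover, writing $r=\#(\Pi_0\vee\Pi_1)$, if $r>1$ then $$\#(\Pi_0\vee\Pi)+\#(\Pi_1\vee\Pi)\le k+1-\lfloor r/2\rfloor.$$
   Context: $\mathrm{Part}(k)$ is the set of set partitions of $\{1,\dots,k\}$ (families of nonempty pairwise disjoint subsets, called parts, whose union is $\{1,\dots,k\}$). $\Sigma$ refines $\Pi$ if every part of $\Sigma$ is contained in a part of $\Pi$. $\Pi\vee\Sigma$ is the finest partition refined by both $\Pi$ and $\Sigma$. A perfect matching is a partition all of whose parts have cardinality 2. $\mathrm{Part}_2(k)$ is the set of partitions all of whose parts have cardinality at least 2. $\#S$ is the cardinality of $S$ and $\lfloor x\rfloor$ the integer part. *)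

From mathcomp Require Import all_boot.
Set Implicit Arguments. Unset Strict Implicit. Unset Printing Implicit Defensive.

(* A set partition of the finite type T (ground set {1..k} is modelled by 'I_k):
   a family of nonempty pairwise disjoint subsets covering T (finset's [partition]). *)
Definition is_part (T : finType) (P : {set {set T}}) : Prop :=
  partition P [set: T].

Definition refines (T : finType) (S P : {set {set T}}) : Prop :=
  forall B, B \in S -> exists2 C, C \in P & B \subset C.

Definition is_join (T : finType) (P Q J : {set {set T}}) : Prop :=
  [/\ is_part J, refines P J, refines Q J &
      forall R, is_part R -> refines P R -> refines Q R -> refines J R].

Definition is_part2 (T : finType) (P : {set {set T}}) : Prop :=
  is_part P /\ forall B, B \in P -> 2 <= #|B|.

Definition perfect_matching (T : finType) (P : {set {set T}}) : Prop :=
  is_part P /\ forall B, B \in P -> #|B| = 2.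

(* Partitions are encoded as edge lists whose connected components are the blocks, so
   that joins become concatenations and the perfect matchings Pi0, Pi1 become the graphs
   M0, M1 of fixed-point-free involutions p0, p1. The first inequality is submodularity
   of the number c of components. The second one follows from
     c(M0 + F) + c(M1 + F) + c(M0 + M1) + c(F) <= n + 2 c(M0 + M1 + F) + #isolated(F),
   valid for every graph F on n vertices. Detaching a vertex from an odd component of
   size >= 3, and then joining two isolated vertices of the same component of M0 + F
   (which exist by parity), reduces it to graphs F whose components are all even. For
   those, re-pairing p1 two edges at a time towards p0 never increases the slack, and the
   case p1 = p0 is immediate. *)

From mathcomp Require Import all_boot.
From mathcomp Require Import zify.
Set Implicit Arguments. Unset Strict Implicit. Unset Printing Implicit Defensive.

Section Connectivity.
Variable T : finType.
Implicit Types (s g F : seq (T * T)) (x y z u v w : T).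

Definition adj s : rel T := fun x y => ((x, y) \in s) || ((y, x) \in s).
Definition conn s : rel T := connect (adj s).
Definition comp s x : {set T} := [set y | conn s x y].
Definition comps s : {set {set T}} := [set comp s x | x : T].
Definition ncomps s := #|comps s|.
Definition isolated s x := comp s x == [set x].
Definition nisol s := #|[set x | isolated s x]|.

Lemma conn_sym s : symmetric (conn s).
Proof. by apply: sym_connect_sym => x y; rewrite /adj orbC. Qed.

Lemma conn_refl s x : conn s x x.
Proof. exact: connect0. Qed.

Lemma conn_trans s : transitive (conn s).
Proof. exact: connect_trans. Qed.

Lemma conn_edge s u v : (u, v) \in s -> conn s u v.
Proof. by move=> uv; apply: connect1; rewrite /adj uv. Qed.

Lemma conn_edgeV s u v : (u, v) \in s -> conn s v u.
Proof. by move=> uv; rewrite conn_sym conn_edge. Qed.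

Lemma conn_least s (R : rel T) : reflexive R -> transitive R ->
  (forall u v, (u, v) \in s -> R u v /\ R v u) -> subrel (conn s) R.
Proof.
move=> Rr Rt Rs x y /connectP [p xp ->] {y}.
elim: p x xp => [|z p IHp] x /=; first by move=> _; apply: Rr.
case/andP => xz /IHp; apply: Rt.
by case/orP: xz => /Rs [].
Qed.

Lemma conn_sub s s' : (forall u v, (u, v) \in s -> conn s' u v) ->
  subrel (conn s) (conn s').
Proof.
move=> ss'; apply: conn_least; [exact: conn_refl | exact: conn_trans |].
by move=> u v /ss' uv; split; rewrite // conn_sym.
Qed.

Lemma conn_subset s s' : {subset s <= s'} -> subrel (conn s) (conn s').
Proof. by move=> ss'; apply: conn_sub => u v /ss'; apply: conn_edge. Qed.

Lemma conn_catl s s' : subrel (conn s) (conn (s ++ s')).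
Proof. by apply: conn_subset => e; rewrite mem_cat => ->. Qed.

Lemma conn_catr s s' : subrel (conn s') (conn (s ++ s')).
Proof. by apply: conn_subset => e; rewrite mem_cat orbC => ->. Qed.

Lemma eq_conn s s' : (forall u v, (u, v) \in s -> conn s' u v) ->
  (forall u v, (u, v) \in s' -> conn s u v) -> conn s =2 conn s'.
Proof. by move=> ss' s's x y; apply/idP/idP; apply: conn_sub. Qed.

Lemma eq_conn_mem s s' : s =i s' -> conn s =2 conn s'.
Proof. by move=> ss'; apply: eq_conn => u v uv; apply: conn_edge; rewrite ?ss' // -ss'. Qed.

Lemma conn_congr G H s s' : conn s =2 conn s' ->
  conn (G ++ s ++ H) =2 conn (G ++ s' ++ H).
Proof.
have sub t t' : conn t =2 conn t' -> forall u v, (u, v) \in G ++ t ++ H ->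
    conn (G ++ t' ++ H) u v.
  move=> tt' u v; rewrite !mem_cat => /or3P [] uv.
  - by apply: conn_subset (conn_edge uv) => e; rewrite !mem_cat => ->.
  - rewrite catA; apply: conn_catl; apply: conn_catr.
    by rewrite -tt'; apply: conn_edge.
  - by apply: conn_subset (conn_edge uv) => e; rewrite !mem_cat => ->; rewrite !orbT.
by move=> ss'; apply: eq_conn; [apply: (sub s s') | apply: (sub s' s)] => // x y; rewrite ss'.
Qed.

Lemma conn_cons s u v x y :
  conn ((u, v) :: s) x y = [|| conn s x y, conn s x u && conn s v y | conn s x v && conn s u y].
Proof.
have Ct := @conn_trans s; apply/idP/idP.
- move: x y; apply: conn_least => [x|y x z|u' v'].
  + by rewrite conn_refl.
  + move=> /or3P [h|/andP [h1 h2]|/andP [h1 h2]] /or3P [h'|/andP [h1' h2']|/andP [h1' h2']].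
    * by rewrite (Ct _ _ _ h h').
    * by rewrite (Ct _ _ _ h h1') h2' orbT.
    * by rewrite (Ct _ _ _ h h1') h2' !orbT.
    * by rewrite h1 (Ct _ _ _ h2 h') orbT.
    * by rewrite h1 h2' orbT.
    * by rewrite (Ct _ _ _ h1 h2').
    * by rewrite h1 (Ct _ _ _ h2 h') !orbT.
    * by rewrite (Ct _ _ _ h1 h2').
    * by rewrite h1 h2' !orbT.
  + rewrite inE => /orP [/eqP [-> ->]|uv]; first by rewrite !conn_refl !orbT.
    by rewrite (conn_edge uv) (conn_edgeV uv).
- have sub : subrel (conn s) (conn ((u, v) :: s)).
    by apply: conn_subset => e; rewrite inE => ->; rewrite orbT.
  have uv : conn ((u, v) :: s) u v by apply: conn_edge; rewrite inE eqxx.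
  case/or3P => [/sub //|/andP [/sub xu /sub vy]|/andP [/sub xv /sub uy]].
    exact: conn_trans xu (conn_trans uv vy).
  by apply: conn_trans xv (conn_trans _ uy); rewrite conn_sym.
Qed.

Lemma mem_comp s x y : (y \in comp s x) = conn s x y.
Proof. by rewrite inE. Qed.

Lemma comp_self s x : x \in comp s x.
Proof. by rewrite mem_comp conn_refl. Qed.

Lemma eq_comp s x y : conn s x y -> comp s x = comp s y.
Proof.
move=> xy; apply/setP => z; rewrite !mem_comp; apply/idP/idP; last exact: conn_trans.
by apply: conn_trans; rewrite conn_sym.
Qed.

Lemma comp_eqE s x y : (comp s x == comp s y) = conn s x y.
Proof. by apply/eqP/idP => [xy|/eq_comp //]; rewrite -mem_comp xy comp_self. Qed.

Lemma compsP s C : reflect (exists x, C = comp s x) (C \in comps s).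
Proof. by apply: (iffP imsetP) => [[x _ ->]|[x ->]]; exists x. Qed.

Lemma comp_in_comps s x : comp s x \in comps s.
Proof. by apply/compsP; exists x. Qed.

Lemma comps_partition s : partition (comps s) [set: T].
Proof.
have -> : comps s = equivalence_partition (conn s) [set: T].
  apply/setP => C; apply/compsP/imsetP => [[x ->]|[x _ ->]]; exists x => //;
  by apply/setP => y; rewrite !inE.
apply: equivalence_partitionP => x y z _ _ _; split; first exact: conn_refl.
by move=> xy; apply/idP/idP; [apply: conn_trans; rewrite conn_sym | apply: conn_trans].
Qed.

Lemma eq_comp_conn s s' : conn s =2 conn s' -> comp s =1 comp s'.
Proof. by move=> ss' x; apply/setP => y; rewrite !mem_comp ss'. Qed.

Lemma eq_ncomps s s' : conn s =2 conn s' -> ncomps s = ncomps s'.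
Proof. by move=> ss'; rewrite /ncomps /comps (eq_imset _ (eq_comp_conn ss')). Qed.

Lemma eq_nisol s s' : conn s =2 conn s' -> nisol s = nisol s'.
Proof. by move=> ss'; apply: eq_card => x; rewrite !inE /isolated (eq_comp_conn ss'). Qed.

Lemma ncomps_le s : (forall x, 2 <= #|comp s x|) -> 2 * ncomps s <= #|T|.
Proof.
move=> comp_ge2; rewrite -cardsT (card_partition (comps_partition s)) mulnC.
by rewrite -sum_nat_const; apply: leq_sum => C /compsP [x ->].
Qed.

Lemma comp_cons s u v x : ~~ conn s u v ->
  comp ((u, v) :: s) x = if conn s x u || conn s x v then comp s u :|: comp s v else comp s x.
Proof.
move=> nuv; apply/setP => y; rewrite mem_comp conn_cons.
have [xu|nxu] /= := boolP (conn s x u).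
  have -> : conn s x v = false by apply: contraNF nuv; apply: conn_trans; rewrite conn_sym.
  by rewrite andFb orbF -!mem_comp (eq_comp xu) in_setU.
have [xv|nxv] /= := boolP (conn s x v); last by rewrite orbF mem_comp.
by rewrite -!mem_comp (eq_comp xv) in_setU orbC.
Qed.

Lemma ncomps_cons s u v : ncomps ((u, v) :: s) + ~~ conn s u v = ncomps s.
Proof.
have [uv|nuv] /= := boolP (conn s u v).
  rewrite addn0; apply: eq_ncomps => x y; rewrite conn_cons.
  apply/idP/idP => [/or3P [//|/andP [xu vy]|/andP [xv uy]]|->//].
    exact: conn_trans xu (conn_trans uv vy).
  by apply: conn_trans xv (conn_trans _ uy); rewrite conn_sym.
pose M := comp s u :|: comp s v.
pose f (C : {set T}) := if (u \in C) || (v \in C) then M else C.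
have comps_cons : comps ((u, v) :: s) = f @: comps s.
  apply/setP => C; apply/compsP/imsetP => [[x ->]|[D /compsP [x ->] ->]].
    by exists (comp s x); rewrite ?comp_in_comps // comp_cons // /f !mem_comp !(conn_sym s x).
  by exists x; rewrite comp_cons // /f !mem_comp !(conn_sym s x).
have fu : f (comp s u) = f (comp s v) by rewrite /f !comp_self !orbT.
have finj : {in comps s :\ comp s u &, injective f}.
  have key C : C \in comps s :\ comp s u -> u \notin C /\ (v \in C -> C = comp s v).
    rewrite !inE => /andP [uC /compsP [x Cx]]; subst C; rewrite !mem_comp.
    by split=> [|/eq_comp //]; apply: contra uC; rewrite comp_eqE conn_sym.
  move=> C D /key [/negbTE uC vC] /key [/negbTE uD vD]; rewrite /f uC uD /=.
  have [/vC -> | nvC] := boolP (v \in C); have [/vD -> | nvD] := boolP (v \in D) => //.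
  - by move=> MD; move: uD; rewrite -MD inE comp_self.
  - by move=> CM; move: uC; rewrite CM inE comp_self.
have uA := comp_in_comps s u.
rewrite /ncomps comps_cons -{1}(setD1K uA) imsetU1 fu.
rewrite (setUidPr _) ?addn1; last first.
  by rewrite sub1set imset_f // !inE comp_eqE conn_sym nuv comp_in_comps.
by rewrite card_in_imset // [in RHS](cardsD1 (comp s u)) uA add1n.
Qed.

Lemma conn_cat_cons G H e : conn (G ++ e :: H) =2 conn (e :: G ++ H).
Proof. by apply: eq_conn_mem => f; rewrite !(mem_cat, inE) orbCA. Qed.

Lemma ncomps_submod g g' h :
  ncomps (g ++ h) + ncomps (g' ++ h) <= ncomps h + ncomps (g ++ g' ++ h).
Proof.
elim: g => [|[u v] g IHg] /=; first by rewrite addnC.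
have := ncomps_cons (g ++ h) u v; have := ncomps_cons (g ++ g' ++ h) u v.
have : conn (g ++ h) u v -> conn (g ++ g' ++ h) u v.
  by apply: conn_subset => e; rewrite !mem_cat => /orP [] ->; rewrite ?orbT.
move: IHg; case: (conn (g ++ g' ++ h) u v); case: (conn (g ++ h) u v) => //=; lia.
Qed.

Lemma ncomps_cross_le s x a y b :
  ncomps ((x, a) :: (y, b) :: s) <= ncomps ((x, y) :: (a, b) :: s) + 1.
Proof.
have := ncomps_cons ((y, b) :: s) x a; have := ncomps_cons s y b.
have := ncomps_cons ((a, b) :: s) x y; have := ncomps_cons s a b.
rewrite !conn_cons !(conn_sym s b) (conn_sym s a y).
have Ct := @conn_trans s.
case: (boolP (conn s y b)) => yb /=; last by lia.
case: (boolP (conn s a b)) => ab /=; first by lia.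
case: (boolP (conn s x a)) => xa /=; first by rewrite orbT /=; lia.
case: (boolP (conn s x y)) => xy /=; first by lia.
case: (boolP (conn s x b)) => xb /=; last by lia.
case: (boolP (conn s y a)) => ya /=; last by lia.
by case/negP: ab; apply: (Ct y); rewrite // conn_sym.
Qed.

Lemma ncomps_cross s x y a b : conn s x y ->
  ncomps ((x, a) :: (y, b) :: s) + (~~ conn s x a && ~~ conn s x b) =
  ncomps ((x, y) :: (a, b) :: s).
Proof.
move=> xy; have Ct := @conn_trans s.
have ya : conn s y a = conn s x a by apply/idP/idP; apply: Ct; rewrite // conn_sym.
have yb : conn s y b = conn s x b by apply/idP/idP; apply: Ct; rewrite // conn_sym.
have := ncomps_cons ((y, b) :: s) x a; have := ncomps_cons s y b.
have := ncomps_cons ((a, b) :: s) x y; have := ncomps_cons s a b.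
rewrite !conn_cons xy ya yb (conn_sym s b a) /=.
case: (boolP (conn s x a)) => xa /=.
  have -> : conn s a b = conn s x b by apply/idP/idP; apply: Ct; rewrite // conn_sym.
  by lia.
case: (boolP (conn s x b)) => xb /=; last by lia.
have -> : conn s a b = false by apply: contraNF xa => ab; apply: Ct xb _; rewrite conn_sym.
by lia.
Qed.

Lemma isolatedE s x : isolated s x -> forall y, conn s x y = (y == x).
Proof. by move=> /eqP xI y; rewrite -mem_comp xI inE. Qed.

Lemma isolated_cons s u v z : u != v ->
  isolated ((u, v) :: s) z = isolated s z && (z \notin [set u; v]).
Proof.
move=> uv; apply/idP/idP => [zI|/andP [zI]].
  have sub : comp s z \subset comp ((u, v) :: s) z.
    by apply/subsetP => w; rewrite !mem_comp conn_cons => ->.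
  have -> : isolated s z.
    by rewrite /isolated eqEsubset sub1set comp_self andbT -(eqP zI).
  rewrite !inE; apply/norP; split; apply/negP => /eqP zE; subst z; move: uv.
    by rewrite eq_sym -(isolatedE zI) conn_cons !conn_refl !orbT.
  by rewrite -(isolatedE zI) conn_cons !conn_refl !orbT.
rewrite !inE => /norP [zu zv]; apply/eqP/setP => w.
rewrite mem_comp conn_cons !(isolatedE zI) !inE (eq_sym u) (eq_sym v).
by rewrite (negbTE zu) (negbTE zv) orbF.
Qed.

Lemma nisol_cons s u v : u != v ->
  nisol ((u, v) :: s) + isolated s u + isolated s v = nisol s.
Proof.
move=> uv; rewrite /nisol; set I := [set x | isolated s x].
have -> : [set x | isolated ((u, v) :: s) x] = I :\ u :\ v.
  apply/setP => z; rewrite !inE isolated_cons // !inE negb_or.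
  by case: (isolated s z); case: (z == u); case: (z == v).
rewrite -addnA [#|I|](cardsD1 u) [#|I :\ u|](cardsD1 v) !inE eq_sym uv /=.
by rewrite addnC addnA.
Qed.

Lemma even_card_cover (cl : T -> {set T}) (S : {set T}) :
  (forall x, x \in cl x) -> (forall x y, y \in cl x -> cl y = cl x) ->
  (forall x, x \in S -> cl x \subset S) -> (forall x, x \in S -> ~~ odd #|cl x|) ->
  ~~ odd #|S|.
Proof.
move=> clx cly; elim: {S}_.+1 {-2}S (ltnSn #|S|) => // n IHn S.
have [->|[x xS]] := set_0Vmem S; first by rewrite cards0.
move=> Sn clS clE; have clxS := clS x xS.
rewrite -(cardsID (cl x) S) (setIidPr clxS) oddD (negbTE (clE x xS)) /=.
have disj y : y \in S :\: cl x -> [disjoint cl y & cl x].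
  rewrite inE => /andP [ynx _]; apply/pred0P => z /=; apply/negbTE/negP => /andP [zy zx].
  by move: ynx; rewrite -(cly _ _ zx) (cly _ _ zy) clx.
apply: IHn => [|y yD|y /setDP [yS _]]; last exact: clE.
  have : 0 < #|cl x| by apply/card_gt0P; exists x.
  by move: Sn; rewrite -(cardsID (cl x) S) (setIidPr clxS); lia.
apply/subsetP => z zy; move: (yD); rewrite !inE => /andP [_ yS].
rewrite (subsetP (clS y yS)) // andbT; apply: contraTN (disj y yD) => zx.
by apply/pred0Pn; exists z; rewrite /= zy.
Qed.

Lemma even_card_inv (p : T -> T) (S : {set T}) : involutive p ->
  (forall z, p z != z) -> {in S, forall z, p z \in S} -> ~~ odd #|S|.
Proof.
move=> pK pf pS.
apply: (@even_card_cover (fun z => if z \in S then [set z; p z] else [set z])).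
- by move=> z; case: ifP; rewrite !inE eqxx.
- move=> z w; have [zS|zS] := boolP (z \in S); rewrite !inE.
    by case/orP => /eqP ->; rewrite ?zS // pS // pK setUC.
  by move=> /eqP ->; rewrite (negbTE zS).
- move=> z zS; rewrite zS; apply/subsetP => w.
  by rewrite !inE => /orP [] /eqP -> //; apply: pS.
- by move=> z zS; rewrite zS cards2 eq_sym pf.
Qed.

Lemma even_card_comps g (S : {set T}) : (forall x, x \in S -> comp g x \subset S) ->
  (forall x, x \in S -> ~~ odd #|comp g x|) -> ~~ odd #|S|.
Proof.
apply: even_card_cover; first exact: comp_self.
by move=> x y; rewrite mem_comp => /eq_comp ->.
Qed.

Lemma odd_card_comp g (p : T -> T) v : involutive p -> (forall z, p z != z) ->
  ~~ conn g v (p v) -> (forall z, conn g v z -> z != v -> conn g z (p z)) ->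
  odd #|comp g v|.
Proof.
move=> pK pf nvp closed; rewrite (cardsD1 v) comp_self oddD /=.
apply: (even_card_inv pK pf) => z; rewrite !inE => /andP [zv vz].
rewrite (conn_trans vz (closed z vz zv)) andbT; apply: contra nvp => /eqP pzv.
by rewrite -(pK z) pzv in vz.
Qed.

Lemma conn_closed s (S : {set T}) :
  (forall u v, (u, v) \in s -> (u \in S) = (v \in S)) ->
  forall x y, conn s x y -> (x \in S) = (y \in S).
Proof.
move=> Sclosed x y xy; apply/eqP; move: x y xy; apply: conn_least => [x|x y z /eqP -> //|u v].
  by rewrite eqxx.
by move/Sclosed ->; rewrite eqxx.
Qed.

Lemma even_comp_sub F s v : {subset F <= s} -> (forall z, ~~ odd #|comp F z|) ->
  ~~ odd #|comp s v|.
Proof.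
move=> Fs Feven; apply: even_card_comps => [z|z _]; last exact: Feven.
rewrite mem_comp => vz; apply/subsetP => w; rewrite !mem_comp => zw.
exact: conn_trans vz (conn_subset Fs zw).
Qed.

Lemma comp_cons_isolated s u v z : u != v -> isolated s u -> isolated s v ->
  comp ((u, v) :: s) z = if (z == u) || (z == v) then [set u; v] else comp s z.
Proof.
move=> uv uI vI; have nuv : ~~ conn s u v by rewrite (isolatedE uI) eq_sym.
rewrite comp_cons // !(conn_sym s z) (isolatedE uI) (isolatedE vI) (eqP uI) (eqP vI).
by rewrite ![z == _]eq_sym.
Qed.

Definition detach s d : seq (T * T) :=
  [seq e <- enum {: T * T} | [&& conn s e.1 e.2, e.1 != d & e.2 != d]].

Lemma conn_detach s d u w :
  conn (detach s d) u w = (u == w) || [&& conn s u w, u != d & w != d].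
Proof.
apply/idP/idP => [|/orP [/eqP -> | uw]]; last 2 first.
- exact: conn_refl.
- by apply: conn_edge; rewrite mem_filter uw mem_enum.
move: u w; apply: conn_least => [u|v u w|u w].
- by rewrite eqxx.
- case/orP => [/eqP -> //|/and3P [uv ud vd]] /orP [/eqP <-|/and3P [vw _ wd]].
    by rewrite uv ud vd orbT.
  by rewrite (conn_trans uv vw) ud wd orbT.
- by rewrite mem_filter /= => /andP [/and3P [uw ud wd] _]; rewrite uw (conn_sym s w) uw ud wd !orbT.
Qed.

Lemma comp_detach s d z : z != d -> comp (detach s d) z = comp s z :\ d.
Proof.
move=> zd; apply/setP => w; rewrite !inE conn_detach zd /=.
by have [<-|_] := eqVneq z w; rewrite ?zd ?conn_refl // andbC.
Qed.

Lemma isolated_detach s d : isolated (detach s d) d.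
Proof. by apply/eqP/setP => w; rewrite !inE conn_detach eqxx andbF orbF eq_sym. Qed.

Lemma conn_detach_cons s d c : c != d -> conn s d c -> conn ((d, c) :: detach s d) =2 conn s.
Proof.
move=> cd dc; apply: eq_conn => u w.
  rewrite inE => /orP [/eqP [-> ->] //|/conn_edge].
  by rewrite conn_detach => /orP [/eqP ->|/and3P []]; rewrite ?conn_refl.
move=> /conn_edge uw; rewrite conn_cons !conn_detach.
have [ud|ud] := eqVneq u d; have [wd|wd] := eqVneq w d; rewrite ?eqxx ?andbF ?andbT /=.
- by rewrite ud wd eqxx.
- have cw : conn s c w by apply: (@conn_trans s d); [rewrite conn_sym | rewrite -ud].
  by rewrite cd cw !orbT.
- have uc : conn s u c by apply: (@conn_trans s d); rewrite // -wd.
  by rewrite uc cd !orbT.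
- by rewrite uw orbT.
Qed.

Definition mgraph (p : T -> T) := [seq (z, p z) | z <- enum T].

Lemma mem_mgraph p u v : ((u, v) \in mgraph p) = (v == p u).
Proof. by apply/mapP/eqP => [[z _ [-> ->]] //|->]; exists u; rewrite ?mem_enum. Qed.

Lemma even_comp_mgraph (p : T -> T) s v : involutive p -> (forall z, p z != z) ->
  {subset mgraph p <= s} -> ~~ odd #|comp s v|.
Proof.
move=> pK pf ps; apply: (even_card_inv pK pf) => z; rewrite !mem_comp => vz.
by apply: conn_trans vz (conn_edge (ps _ _)); rewrite mem_mgraph.
Qed.

Lemma ncomps_mgraph_le (p : T -> T) : (forall z, p z != z) -> 2 * ncomps (mgraph p) <= #|T|.
Proof.
move=> pf; apply: ncomps_le => z.
apply: leq_trans (_ : 2 <= #|[set z; p z]|) _; first by rewrite cards2 eq_sym pf.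
apply: subset_leq_card; apply/subsetP => w; rewrite !inE => /orP [] /eqP ->.
  exact: conn_refl.
by apply: conn_edge; rewrite mem_mgraph.
Qed.

End Connectivity.

Section MatchingInequality.
Variable T : finType.
Implicit Types (F : seq (T * T)) (p : T -> T) (u v x : T).

Lemma ncomps_cat_cons (G F : seq (T * T)) u v :
  ncomps (G ++ (u, v) :: F) + ~~ conn (G ++ F) u v = ncomps (G ++ F).
Proof. by rewrite (eq_ncomps (conn_cat_cons G F (u, v))) ncomps_cons. Qed.

Definition ncomps_ineq p0 p1 F : Prop :=
  ncomps (mgraph p0 ++ F) + ncomps (mgraph p1 ++ F) + ncomps (mgraph p0 ++ mgraph p1)
    + ncomps F
  <= #|T| + 2 * ncomps (mgraph p0 ++ mgraph p1 ++ F) + nisol F.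

Lemma eq_ncomps_ineq p0 p1 F F' :
  conn F =2 conn F' -> ncomps_ineq p0 p1 F -> ncomps_ineq p0 p1 F'.
Proof.
move=> FF'; have eqG G : ncomps (G ++ F) = ncomps (G ++ F').
  by apply: eq_ncomps => x y; have := conn_congr G [::] FF' x y; rewrite !cats0.
by rewrite /ncomps_ineq catA !eqG -catA (eq_ncomps FF') (eq_nisol FF').
Qed.

Lemma ncomps_ineq_cons p0 p1 F u v : u != v -> ~~ isolated F v ->
  ncomps_ineq p0 p1 F -> ncomps_ineq p0 p1 ((u, v) :: F).
Proof.
move=> uv nvI; rewrite /ncomps_ineq.
have := ncomps_cat_cons (mgraph p0) F u v; have := ncomps_cat_cons (mgraph p1) F u v.
have := ncomps_cat_cons (mgraph p0 ++ mgraph p1) F u v; have := ncomps_cons F u v.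
have := nisol_cons F uv; rewrite (negbTE nvI) -!catA.
have sub0 : conn (mgraph p0 ++ F) u v -> conn (mgraph p0 ++ mgraph p1 ++ F) u v.
  by apply: conn_subset => e; rewrite !mem_cat => /orP [] ->; rewrite ?orbT.
have sub1 : conn (mgraph p1 ++ F) u v -> conn (mgraph p0 ++ mgraph p1 ++ F) u v.
  by apply: conn_subset => e; rewrite !mem_cat => /orP [] ->; rewrite ?orbT.
have uIF : isolated F u -> ~~ conn F u v by move/isolatedE->; rewrite eq_sym.
move: sub0 sub1 uIF; case: (isolated F u); case: (conn F u v);
  case: (conn (mgraph p0 ++ F) u v); case: (conn (mgraph p1 ++ F) u v);
  case: (conn (mgraph p0 ++ mgraph p1 ++ F) u v) => //=; lia.
Qed.

Lemma ncomps_ineq_uncons p0 p1 F u v : u != v -> isolated F u -> isolated F v ->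
  conn (mgraph p0 ++ F) u v -> ncomps_ineq p0 p1 ((u, v) :: F) -> ncomps_ineq p0 p1 F.
Proof.
move=> uv uI vI uv0; rewrite /ncomps_ineq.
have := ncomps_cat_cons (mgraph p0) F u v; have := ncomps_cat_cons (mgraph p1) F u v.
have := ncomps_cat_cons (mgraph p0 ++ mgraph p1) F u v; have := ncomps_cons F u v.
have := nisol_cons F uv; rewrite uI vI uv0 (isolatedE uI) eq_sym (negbTE uv) -!catA.
have -> : conn (mgraph p0 ++ mgraph p1 ++ F) u v.
  by move: uv0; apply: conn_subset => e; rewrite !mem_cat => /orP [] ->; rewrite ?orbT.
by case: (conn (mgraph p1 ++ F) u v) => /=; lia.
Qed.

(* Matches x with p0 x and p1 x with p1 (p0 x); agrees with p1 elsewhere. *)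
Definition swap_at p0 p1 x : T -> T := fun z =>
  if z == x then p0 x else if z == p0 x then x
  else if z == p1 x then p1 (p0 x) else if z == p1 (p0 x) then p1 x else p1 z.

Section Swap.
Variables (p0 p1 : T -> T) (F : seq (T * T)) (x : T).
Hypotheses (p0K : involutive p0) (p1K : involutive p1)
  (p0f : forall z, p0 z != z) (p1f : forall z, p1 z != z)
  (Feven : forall z, ~~ odd #|comp F z|) (p10x : p1 x != p0 x).

Let y := p0 x.
Let a := p1 x.
Let b := p1 y.
Let q := swap_at p0 p1 x.

Let xy : x != y. Proof. by rewrite eq_sym p0f. Qed.
Let xa : x != a. Proof. by rewrite eq_sym p1f. Qed.
Let yb : y != b. Proof. by rewrite eq_sym p1f. Qed.
Let ay : a != y. Proof. exact: p10x. Qed.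
Let bx : b != x. Proof. by apply: contra ay => /eqP bxE; rewrite /a -bxE /b p1K. Qed.
Let ab : a != b. Proof. by apply: contra xy => /eqP /(can_inj p1K) ->. Qed.
Let p1a : p1 a = x. Proof. exact: p1K. Qed.
Let p1b : p1 b = y. Proof. exact: p1K. Qed.
Let p0y : p0 y = x. Proof. exact: p0K. Qed.

Lemma swap_at_x : q x = y. Proof. by rewrite /q /swap_at eqxx. Qed.
Lemma swap_at_y : q y = x. Proof. by rewrite /q /swap_at eq_sym (negbTE xy) eqxx. Qed.
Lemma swap_at_a : q a = b.
Proof. by rewrite /q /swap_at -/y -/a -/b eq_sym (negbTE xa) (negbTE ay) eqxx. Qed.
Lemma swap_at_b : q b = a.
Proof.
by rewrite /q /swap_at -/y -/a -/b (negbTE bx) eq_sym (negbTE yb) eq_sym (negbTE ab) eqxx.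
Qed.
Lemma swap_at_other z : z \notin [:: x; y; a; b] -> q z = p1 z.
Proof.
rewrite !inE => /norP [/negbTE zx /norP [/negbTE zy /norP [/negbTE za /negbTE zb]]].
by rewrite /q /swap_at -/y -/a -/b zx zy za zb.
Qed.

Lemma swap_at_involutive : involutive q.
Proof.
move=> z; have [zxyab|zo] := boolP (z \in [:: x; y; a; b]); last first.
  rewrite (swap_at_other zo) swap_at_other ?p1K //; apply: contra zo.
  by rewrite !inE !(inv_eq p1K) -/a -/b p1a p1b => /or4P [] ->; rewrite ?orbT.
move: zxyab; rewrite !inE => /or4P [] /eqP ->.
- by rewrite swap_at_x swap_at_y.
- by rewrite swap_at_y swap_at_x.
- by rewrite swap_at_a swap_at_b.
- by rewrite swap_at_b swap_at_a.
Qed.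

Lemma swap_at_fixpointfree z : q z != z.
Proof.
have [|zo] := boolP (z \in [:: x; y; a; b]); last by rewrite swap_at_other.
rewrite !inE => /or4P [] /eqP ->.
- by rewrite swap_at_x eq_sym.
- by rewrite swap_at_y.
- by rewrite swap_at_a eq_sym.
- by rewrite swap_at_b.
Qed.

Lemma swap_at_closer : #|[set z | q z != p0 z]| < #|[set z | p1 z != p0 z]|.
Proof.
apply: proper_card; apply/properP; split; last by exists x; rewrite !inE // swap_at_x eqxx.
apply/subsetP => z; rewrite !inE.
have [|zo] := boolP (z \in [:: x; y; a; b]); last by rewrite swap_at_other.
rewrite !inE => /or4P [] /eqP ->.
- by rewrite swap_at_x eqxx.
- by rewrite swap_at_y p0K eqxx.
- by move=> _; rewrite p1a -(inv_eq p0K) eq_sym.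
- by move=> _; rewrite p1b -(inv_eq p0K) p0K eq_sym.
Qed.

Let Em := [seq e <- mgraph p1 | e.1 \notin [:: x; y; a; b]].

Let mem_Em u v : ((u, v) \in Em) = (v == p1 u) && (u \notin [:: x; y; a; b]).
Proof. by rewrite mem_filter mem_mgraph andbC. Qed.

Let conn_Em s z : {subset Em <= s} -> z \notin [:: x; y; a; b] -> conn s z (p1 z).
Proof. by move=> Ems zo; apply: conn_edge; apply: Ems; rewrite mem_Em eqxx zo. Qed.

Let conn_mgraph_p1 : conn (mgraph p1) =2 conn ((x, a) :: (y, b) :: Em).
Proof.
apply: eq_conn => u v; last first.
  rewrite !inE mem_Em => /or3P [/eqP [-> ->] | /eqP [-> ->] | /andP [/eqP -> _]];
  by apply: conn_edge; rewrite mem_mgraph.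
rewrite mem_mgraph => /eqP ->; have [|uo] := boolP (u \in [:: x; y; a; b]).
  rewrite !inE => /or4P [] /eqP ->; rewrite ?p1a ?p1b.
  - by apply: conn_edge; rewrite inE eqxx.
  - by apply: conn_edge; rewrite !inE eqxx orbT.
  - by apply: conn_edgeV; rewrite inE eqxx.
  - by apply: conn_edgeV; rewrite !inE eqxx orbT.
by apply: conn_edge; rewrite !inE mem_Em eqxx uo !orbT.
Qed.

Let conn_mgraph_q : conn (mgraph q) =2 conn ((x, y) :: (a, b) :: Em).
Proof.
apply: eq_conn => u v; last first.
  rewrite !inE mem_Em => /or3P [/eqP [-> ->] | /eqP [-> ->] | /andP [/eqP -> uo]];
  apply: conn_edge; rewrite mem_mgraph ?swap_at_x ?swap_at_a ?swap_at_other //.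
rewrite mem_mgraph => /eqP ->; have [|uo] := boolP (u \in [:: x; y; a; b]).
  rewrite !inE => /or4P [] /eqP ->.
  - by rewrite swap_at_x; apply: conn_edge; rewrite inE eqxx.
  - by rewrite swap_at_y; apply: conn_edgeV; rewrite inE eqxx.
  - by rewrite swap_at_a; apply: conn_edge; rewrite !inE eqxx orbT.
  - by rewrite swap_at_b; apply: conn_edgeV; rewrite !inE eqxx orbT.
by rewrite swap_at_other //; apply: conn_edge; rewrite !inE mem_Em eqxx uo !orbT.
Qed.

Let cons2_cat (e1 e2 : T * T) G H :
  conn (G ++ (e1 :: e2 :: Em) ++ H) =2 conn (e1 :: e2 :: G ++ Em ++ H).
Proof.
by apply: eq_conn_mem => e; rewrite !(mem_cat, inE); case: (e \in G); rewrite /= ?orbT ?orbA.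
Qed.

Let ncomps_mgraph_p1 G H :
  ncomps (G ++ mgraph p1 ++ H) = ncomps ((x, a) :: (y, b) :: G ++ Em ++ H).
Proof. by apply: eq_ncomps => u v; rewrite (conn_congr G H conn_mgraph_p1) cons2_cat. Qed.

Let ncomps_mgraph_q G H :
  ncomps (G ++ mgraph q ++ H) = ncomps ((x, y) :: (a, b) :: G ++ Em ++ H).
Proof. by apply: eq_ncomps => u v; rewrite (conn_congr G H conn_mgraph_q) cons2_cat. Qed.

Let nconn_xa : ~~ conn (mgraph p0 ++ Em) x a.
Proof.
have closed u v : (u, v) \in mgraph p0 ++ Em -> (u \in [set x; y]) = (v \in [set x; y]).
  rewrite mem_cat mem_mgraph mem_Em !inE => /orP [/eqP ->|/andP [/eqP -> uo]].
    by rewrite !(inv_eq p0K) -/y p0y orbC.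
  move: uo; rewrite !(inv_eq p1K) -/a -/b.
  by case/norP=> /negbTE -> /norP [/negbTE -> /norP [/negbTE -> /negbTE ->]].
apply/negP => /(conn_closed closed); rewrite !inE eqxx /= eq_sym.
by rewrite (negbTE xa) (negbTE ay).
Qed.

Let conn_xy G : {subset mgraph p0 <= G} -> conn G x y.
Proof. by move=> M0G; apply: conn_edge; apply: M0G; rewrite mem_mgraph. Qed.

(* Otherwise the component of a would be closed under p0, hence even, and closed under p1
   except at a, hence odd. *)
Let conn_ab : conn (mgraph p0 ++ Em) a b.
Proof.
set h := mgraph p0 ++ Em; have M0h : {subset mgraph p0 <= h} by move=> e; rewrite mem_cat => ->.
apply/negPn/negP => nab; have /negP[] := even_comp_mgraph a p0K p0f M0h.
apply: (odd_card_comp p1K p1f); first by rewrite p1a conn_sym.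
move=> z az za; apply: conn_Em => [e|]; first by rewrite mem_cat orbC => ->.
have ax : ~~ conn h a x by rewrite conn_sym.
rewrite !inE (negbTE za) /=; apply/norP; split; first by apply: contra ax => /eqP <-.
apply/norP; split; last by apply: contra nab => /eqP <-.
apply: contra ax => /eqP zy; apply: conn_trans az _.
by rewrite zy conn_sym conn_xy.
Qed.

Let conn_xy_EmF : ~~ conn (Em ++ F) x a -> ~~ conn (Em ++ F) x b -> conn (Em ++ F) x y.
Proof.
set hc := Em ++ F => nxa nxb; apply/negPn/negP => nxy.
have /negP[] : ~~ odd #|comp hc x| by apply: even_comp_sub Feven => e; rewrite mem_cat orbC => ->.
apply: (odd_card_comp p1K p1f nxa) => z xz zx.
apply: conn_Em => [e|]; first by rewrite mem_cat => ->.
rewrite !inE (negbTE zx) /=; apply/norP; split; first by apply: contra nxy => /eqP <-.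
by apply/norP; split; [apply: contra nxa | apply: contra nxb] => /eqP <-.
Qed.

Lemma ncomps_ineq_swap_at : ncomps_ineq p0 q F -> ncomps_ineq p0 p1 F.
Proof.
have := ncomps_mgraph_p1 [::] F; have := ncomps_mgraph_q [::] F.
have := ncomps_mgraph_p1 (mgraph p0) [::]; have := ncomps_mgraph_q (mgraph p0) [::].
have := ncomps_mgraph_p1 (mgraph p0) F; have := ncomps_mgraph_q (mgraph p0) F.
rewrite /ncomps_ineq /= !cats0 => -> -> -> -> -> ->.
set h := mgraph p0 ++ Em; set hJ := mgraph p0 ++ Em ++ F; set hc := Em ++ F.
have M0h : {subset mgraph p0 <= h} by move=> e; rewrite mem_cat => ->.
have hJ_h : subrel (conn h) (conn hJ) by rewrite /hJ catA; apply: conn_catl.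
have hJ_hc : subrel (conn hc) (conn hJ) by apply: conn_catr.
have := ncomps_cross a b (conn_xy M0h).
have nxb : ~~ conn h x b.
  by apply: contra nconn_xa => xb; apply: conn_trans xb _; rewrite conn_sym conn_ab.
rewrite (negbTE nconn_xa) (negbTE nxb) /= => cross_h.
have := ncomps_cross a b (hJ_h _ _ (conn_xy M0h)).
have abJ := hJ_h _ _ conn_ab.
have -> : conn hJ x b = conn hJ x a.
  by apply/idP/idP => xv; apply: conn_trans xv _; rewrite // conn_sym.
(* Replacing p1 by q adds one component to M0 + M1 and at most one to M0 + M1 + F, and
   removes at most one from M1 + F; when M0 + M1 + F gains one, parity (conn_xy_EmF)
   makes M1 + F gain one too. *)
have := ncomps_cross_le hc x a y b.
have [xaJ|nxaJ] := boolP (conn hJ x a) => /=.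
  by move=> le_c cross_J IH; clear -le_c cross_J IH cross_h; lia.
have nxa : ~~ conn hc x a by apply: contra nxaJ; apply: hJ_hc.
have nxb' : ~~ conn hc x b.
  by apply: contra nxaJ => /hJ_hc xb; apply: conn_trans xb _; rewrite conn_sym.
have := ncomps_cross a b (conn_xy_EmF nxa nxb'); rewrite nxa nxb' /= => cross_c _ cross_J IH.
rewrite -/hc in cross_c; by clear -cross_c cross_J IH cross_h; lia.
Qed.

End Swap.

Lemma ncomps_ineq_even p0 p1 F : involutive p0 -> involutive p1 ->
  (forall z, p0 z != z) -> (forall z, p1 z != z) -> (forall z, ~~ odd #|comp F z|) ->
  ncomps_ineq p0 p1 F.
Proof.
move=> p0K + p0f + Feven.
elim: {p1}_.+1 {-2}p1 (ltnSn #|[set z | p1 z != p0 z]|) => // n IHn p1 p1n p1K p1f.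
have [x p10x|p1E] := pickP (fun z => p1 z != p0 z).
  apply: (@ncomps_ineq_swap_at p0 p1 F x) => //; apply: IHn.
  - exact: leq_trans (swap_at_closer _ _ _ _) p1n.
  - exact: swap_at_involutive.
  - exact: swap_at_fixpointfree.
have p10 : mgraph p1 = mgraph p0 by apply: eq_map => z; have /negbFE/eqP -> := p1E z.
rewrite /ncomps_ineq p10.
have M0M0F : ncomps (mgraph p0 ++ mgraph p0 ++ F) = ncomps (mgraph p0 ++ F).
  by apply/eq_ncomps/eq_conn_mem => e; rewrite !mem_cat orbA orbb.
have M0M0 : ncomps (mgraph p0 ++ mgraph p0) = ncomps (mgraph p0).
  by apply/eq_ncomps/eq_conn_mem => e; rewrite mem_cat orbb.
have M0_le := ncomps_mgraph_le p0f.
have F_le : 2 * ncomps F <= #|T|.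
  apply: ncomps_le => z; have := Feven z; have : 0 < #|comp F z|.
    by apply/card_gt0P; exists z; apply: comp_self.
  by case: #|comp F z| => [|[|]].
by rewrite M0M0F M0M0; lia.
Qed.

Lemma isolated_partner p0 F c : involutive p0 -> (forall z, p0 z != z) ->
  (forall z, ~~ odd #|comp F z| || isolated F z) -> isolated F c ->
  exists2 d, d != c & isolated F d && conn (mgraph p0 ++ F) c d.
Proof.
move=> p0K p0f Fev cI; set K := comp (mgraph p0 ++ F) c.
set S := [set z in K | isolated F z].
have evenK : ~~ odd #|K| by apply: (even_comp_mgraph _ p0K p0f) => e; rewrite mem_cat => ->.
have nonisol z : z \in K :\: S -> ~~ isolated F z.
  by rewrite !inE => /andP [zNS zK]; rewrite zK in zNS.
have evenKS : ~~ odd #|K :\: S|.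
  apply: (even_card_comps (g := F)) => [z zKS|z /nonisol zNI]; last first.
    by have := Fev z; rewrite (negbTE zNI) orbF.
  apply/subsetP => w; rewrite mem_comp => zw; move: (zKS); rewrite !inE => /andP [_ zK].
  rewrite (conn_trans zK (conn_catr _ zw)) andbT; apply: contra (nonisol z zKS) => wI.
  have /set1P -> : z \in [set w] by rewrite -(eqP wI) -(eq_comp zw) comp_self.
  exact: wI.
have : odd #|S :\ c|.
  have SK : S \subset K by apply/subsetP => z; rewrite inE => /andP [].
  move: evenK; rewrite -(cardsID S K) (setIidPr SK) oddD (negbTE evenKS) addbF.
  by rewrite (cardsD1 c) inE comp_self cI oddD /= => /negPn.
move=> /odd_gt0 /card_gt0P [d]; rewrite !inE => /andP [dc /andP [cd dI]].
by exists d; rewrite ?dI.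
Qed.

Lemma ncomps_ineq_even_or_isolated p0 p1 F : involutive p0 -> involutive p1 ->
  (forall z, p0 z != z) -> (forall z, p1 z != z) ->
  (forall z, ~~ odd #|comp F z| || isolated F z) -> ncomps_ineq p0 p1 F.
Proof.
move=> p0K p1K p0f p1f.
elim: {F}_.+1 {-2}F (ltnSn (nisol F)) => // n IHn F Fn Fev.
have [c cI|noI] := pickP (isolated F); last first.
  by apply: ncomps_ineq_even => // z; have := Fev z; rewrite noI orbF.
have [d dc /andP [dI cd]] := isolated_partner p0K p0f Fev cI.
have cd' : c != d by rewrite eq_sym.
apply: (ncomps_ineq_uncons cd' cI dI cd); apply: IHn.
  by move: Fn; rewrite -(nisol_cons F cd') cI dI; lia.
move=> z; rewrite (comp_cons_isolated _ cd' cI dI) isolated_cons // !inE.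
by case: ifP => _; rewrite ?cards2 ?cd' // andbT Fev.
Qed.

Definition big_odd_verts F := [set z | (2 < #|comp F z|) && odd #|comp F z|].

Lemma big_odd_verts_detach F d : d \in big_odd_verts F ->
  big_odd_verts (detach F d) \proper big_odd_verts F.
Proof.
rewrite inE => /andP [d3 dodd]; apply/properP; split; last first.
  by exists d; rewrite !inE ?d3 // (eqP (isolated_detach F d)) cards1.
apply/subsetP => z; rewrite !inE.
have [->|zd] := eqVneq z d; first by rewrite (eqP (isolated_detach F d)) cards1.
rewrite comp_detach //; have [/eq_comp zd_eq|nzd] := boolP (conn F z d).
  rewrite zd_eq => /andP [_]; move: dodd.
  by rewrite (cardsD1 d) comp_self /= => /negPf ->.
suff -> : comp F z :\ d = comp F z by [].
by apply/setP => w; rewrite !inE; have [->|] := eqVneq w d; rewrite ?(negbTE nzd).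
Qed.

Lemma ncomps_ineq_matchings p0 p1 F : involutive p0 -> involutive p1 ->
  (forall z, p0 z != z) -> (forall z, p1 z != z) -> ncomps_ineq p0 p1 F.
Proof.
move=> p0K p1K p0f p1f.
elim: {F}_.+1 {-2}F (ltnSn #|big_odd_verts F|) => // n IHn F Fn.
have [d /andP [d3 dodd]|none] := pickP (fun z => (2 < #|comp F z|) && odd #|comp F z|).
  have /card_gt0P [c] : 0 < #|comp F d :\ d|.
    by move: d3; rewrite (cardsD1 d) comp_self add1n ltnS => /ltnW.
  rewrite !inE => /andP [cd dc].
  apply: (eq_ncomps_ineq (conn_detach_cons cd dc)); apply: ncomps_ineq_cons.
  - by rewrite eq_sym.
  - rewrite /isolated comp_detach // -(eq_comp dc); apply/eqP => dE.
    by move: d3; rewrite (cardsD1 d) comp_self dE cards1.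
  apply: IHn; have : d \in big_odd_verts F by rewrite inE d3.
  by move/big_odd_verts_detach/proper_card; lia.
apply: ncomps_ineq_even_or_isolated => // z; have := none z.
have [zodd|] //= := boolP (odd #|comp F z|); rewrite andbT => /negbT z2.
have /cards1P [w zw] : #|comp F z| == 1 by move: zodd z2; case: #|comp F z| => [|[|[|]]].
by have := comp_self F z; rewrite /isolated zw inE => /eqP ->.
Qed.

End MatchingInequality.

Section Partitions.
Variable T : finType.
Implicit Types (P A B J : {set {set T}}) (x y u v : T).

Definition pgraph P : seq (T * T) := [seq e <- enum {: T * T} | e.2 \in pblock P e.1].

Lemma mem_pgraph P u v : ((u, v) \in pgraph P) = (v \in pblock P u).
Proof. by rewrite mem_filter mem_enum andbT. Qed.

Lemma conn_pgraph P : is_part P -> conn (pgraph P) =2 (fun x y => y \in pblock P x).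
Proof.
move=> Ppart x y; have tP := partition_trivIset Ppart.
have inP z : z \in pblock P z by rewrite mem_pblock (cover_partition Ppart) inE.
apply/idP/idP => [|xy]; last by apply: conn_edge; rewrite mem_pgraph.
move: x y; apply: conn_least => [z|y x z xy yz|u v]; first exact: inP.
  by rewrite -(same_pblock tP xy).
by rewrite mem_pgraph => uv; rewrite (same_pblock tP uv) inP.
Qed.

Lemma comp_pgraph P x : is_part P -> comp (pgraph P) x = pblock P x.
Proof. by move=> Ppart; apply/setP => y; rewrite mem_comp conn_pgraph. Qed.

Lemma ncomps_pgraph P : is_part P -> ncomps (pgraph P) = #|P|.
Proof.
move=> Ppart; rewrite /ncomps -{2}(equivalence_partition_pblock Ppart).
apply: eq_card => C; apply/compsP/imsetP => [[x ->]|[x _ ->]]; exists x => //;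
by apply/setP => y; rewrite !inE conn_pgraph.
Qed.

Lemma nisol_pgraph P : is_part P -> (forall C, C \in P -> 2 <= #|C|) -> nisol (pgraph P) = 0.
Proof.
move=> Ppart P2; apply/eqP; rewrite cards_eq0; apply/eqP/setP => x.
rewrite !inE /isolated comp_pgraph //; apply/negbTE/negP => /eqP xP.
have xcov : x \in cover P by rewrite (cover_partition Ppart) inE.
by have := P2 _ (pblock_mem xcov); rewrite xP cards1.
Qed.

Lemma pblock_refines A J u v : is_part A -> is_part J -> refines A J ->
  v \in pblock A u -> v \in pblock J u.
Proof.
move=> Apart Jpart AJ vu.
have ucov : u \in cover A by rewrite (cover_partition Apart) inE.
have [C CJ /subsetP AC] := AJ _ (pblock_mem ucov).
rewrite (def_pblock (partition_trivIset Jpart) CJ (AC _ _)) ?AC //.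
by rewrite mem_pblock.
Qed.

Lemma refines_comps P s : is_part P -> {subset pgraph P <= s} -> refines P (comps s).
Proof.
move=> Ppart Ps C CP; have /set0Pn [z zC] := partition_neq0 Ppart CP.
exists (comp s z); first exact: comp_in_comps.
apply/subsetP => w wC; rewrite mem_comp; apply/conn_edge/Ps.
by rewrite mem_pgraph (def_pblock (partition_trivIset Ppart) CP zC).
Qed.

Lemma conn_refines_comps P s x y : is_part P -> refines P (comps s) ->
  y \in pblock P x -> conn s x y.
Proof.
move=> Ppart Ps yx; have xcov : x \in cover P by rewrite (cover_partition Ppart) inE.
have [C /compsP [z ->] /subsetP Pz] := Ps _ (pblock_mem xcov).
have := Pz _ yx; have := Pz x; rewrite mem_pblock xcov !mem_comp => /(_ isT) zx zy.
by apply: conn_trans zy; rewrite conn_sym.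
Qed.

Lemma conn_join A B J : is_part A -> is_part B -> is_join A B J ->
  conn (pgraph J) =2 conn (pgraph A ++ pgraph B).
Proof.
move=> Apart Bpart [Jpart AJ BJ Jmin].
have AB : refines J (comps (pgraph A ++ pgraph B)).
  apply: Jmin; first exact: comps_partition.
    by apply: refines_comps => // e; rewrite mem_cat => ->.
  by apply: refines_comps => // e; rewrite mem_cat orbC => ->.
apply: eq_conn => u v; first by rewrite mem_pgraph; apply: conn_refines_comps.
rewrite mem_cat !mem_pgraph => uv; apply: conn_edge; rewrite mem_pgraph.
by case/orP: uv; apply: pblock_refines.
Qed.

Lemma conn_join_graphs A B J gA gB : is_part A -> is_part B -> is_join A B J ->
  conn (pgraph A) =2 conn gA -> conn (pgraph B) =2 conn gB ->
  conn (pgraph J) =2 conn (gA ++ gB).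
Proof.
move=> Apart Bpart AB_J EA EB x y; rewrite (conn_join Apart Bpart AB_J).
have := conn_congr [::] (pgraph B) EA x y; have := conn_congr gA [::] EB x y.
by rewrite /= !cats0 => <- ->.
Qed.

Lemma card_join_graphs A B J gA gB : is_part A -> is_part B -> is_join A B J ->
  conn (pgraph A) =2 conn gA -> conn (pgraph B) =2 conn gB ->
  #|J| = ncomps (gA ++ gB).
Proof.
move=> Apart Bpart AB_J EA EB; have [Jpart _ _ _] := AB_J.
by rewrite -ncomps_pgraph //; apply/eq_ncomps/(conn_join_graphs Apart Bpart AB_J).
Qed.

Lemma perfect_matching_involution P : perfect_matching P ->
  exists p : T -> T, [/\ involutive p, forall z, p z != z & conn (pgraph P) =2 conn (mgraph p)].
Proof.
case=> Ppart P2; have tP := partition_trivIset Ppart.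
have xcov x : x \in cover P by rewrite (cover_partition Ppart) inE.
have xP x : x \in pblock P x by rewrite mem_pblock.
pose p x := odflt x [pick y in pblock P x :\ x].
have pP x : p x \in pblock P x /\ p x != x.
  rewrite /p; case: pickP => [y|none] /=; first by rewrite !inE => /andP [-> ->].
  have /card_gt0P [y] : 0 < #|pblock P x :\ x|.
    by have := P2 _ (pblock_mem (xcov x)); rewrite (cardsD1 x) xP add1n => -[->].
  by rewrite none.
have blockE x : pblock P x = [set x; p x].
  have [pxP pxx] := pP x; apply/esym/eqP.
  rewrite eqEcard (P2 _ (pblock_mem (xcov x))) cards2 eq_sym pxx andbT.
  by apply/subsetP => w; rewrite !inE => /orP [] /eqP ->.
have pK : involutive p.
  move=> x; have [pxP _] := pP x; have [] := pP (p x).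
  by rewrite (same_pblock tP pxP) blockE !inE => /orP [/eqP // | /eqP ->]; rewrite eqxx.
exists p; split=> // [z|]; first by case: (pP z).
apply: eq_conn => u v; rewrite ?mem_pgraph ?mem_mgraph.
  rewrite blockE !inE => /orP [] /eqP ->; first exact: conn_refl.
  by apply: conn_edge; rewrite mem_mgraph.
by move/eqP ->; apply: conn_edge; rewrite mem_pgraph; case: (pP u).
Qed.

End Partitions.

Theorem proposition3p1 (k : nat) (hk : 0 < k)
  (P0 P1 P J01 J0 J1 J : {set {set 'I_(2 * k)}}) :
  is_part2 P0 -> is_part2 P1 -> is_part2 P ->
  perfect_matching P0 -> perfect_matching P1 ->
  is_join P0 P1 J01 -> is_join P0 P J0 -> is_join P1 P J1 ->
  is_join J01 P J -> #|J| = 1 ->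
  (#|J0| + #|J1| <= 1 + #|P| /\ 1 + #|P| <= k + 1) /\
  (1 < #|J01| -> #|J0| + #|J1| <= k + 1 - #|J01| %/ 2).
Proof.
move=> [P0part _] [P1part _] [Ppart P2] m0 m1 j01 j0 j1 j hJ.
have [p0 [p0K p0f E0]] := perfect_matching_involution m0.
have [p1 [p1K p1f E1]] := perfect_matching_involution m1.
have EP : conn (pgraph P) =2 conn (pgraph P) by [].
rewrite (card_join_graphs P0part Ppart j0 E0 EP) (card_join_graphs P1part Ppart j1 E1 EP).
rewrite (card_join_graphs P0part P1part j01 E0 E1).
have J01part : is_part J01 by case: j01.
have E01 := conn_join_graphs P0part P1part j01 E0 E1.
move: hJ; rewrite (card_join_graphs J01part Ppart j E01 EP) -catA => hJ.
have := ncomps_ineq_matchings (pgraph P) p0K p1K p0f p1f.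
have := ncomps_submod (mgraph p0) (mgraph p1) (pgraph P).
have : 2 * #|P| <= 2 * k.
  rewrite -ncomps_pgraph // -[X in _ <= X](card_ord (2 * k)); apply: ncomps_le => x.
  by rewrite comp_pgraph // P2 // pblock_mem // (cover_partition Ppart) inE.
rewrite /ncomps_ineq nisol_pgraph // ncomps_pgraph // card_ord hJ.
by clear; lia.
Qed.
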